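(* Let $X,Y$ be real locally convex Hausdorff topological vector spaces, $M:X\to Y$ a continuous linear mapping, $D\subset X$ a generalized polyhedral convex set, and $K\subset Y$ a polyhedral convex cone. Consider the problem (VLP): $\min_K\{Mx\mid x\in D\}$. Then the set $E^w$ of weakly efficient solutions of (VLP) is the union of finitely many generalized polyhedral convex sets.
   Context: $\langle x^*,x\rangle$ denotes the value of a continuous linear functional $x^*$ at $x$. A generalized polyhedral convex set in $X$ is a set of the form $\{x\in L\mid \langle x_i^*,x\rangle\le\alpha_i,\ i=1,\dots,p\}$ with $x_i^*\in X^*$, $\alpha_i\in\mathbb{R}$, and $L\subset X$ a closed affine subspace; a polyhedral convex cone in $Y$ is a cone of the form $\{y\in Y\mid \langle y_i^*,y\rangle\le\beta_i,\ i=1,\dots,q\}$ with $y_i^*\in Y^*$, $\beta_i\in\mathbb{R}$. A point $u\in D$ is a weakly efficient solution of (VLP) if there is no $x\in D$ with $Mu-Mx\in\operatorname{int}K$, where $\operatorname{int}K$ is the topological interior of $K$. *)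

From HB Require Import structures.
From mathcomp Require Import all_boot all_order all_algebra.
From mathcomp Require Import all_classical all_reals all_analysis.
Set Implicit Arguments. Unset Strict Implicit. Unset Printing Implicit Defensive.
Import Order.TTheory GRing.Theory Num.Theory.
Import numFieldTopology.Exports.
Local Open Scope classical_set_scope.
Local Open Scope ring_scope.

Definition cont_lin_functional (R : realType) (X : tvsType R) (f : X -> R) : Prop :=
  (forall (a : R) (x y : X), f (a *: x + y) = a * f x + f y) /\ continuous f.

Definition cont_lin_map (R : realType) (X Y : tvsType R) (M : X -> Y) : Prop :=
  (forall (a : R) (x y : X), M (a *: x + y) = a *: M x + M y) /\ continuous M.

Definition lin_subspace (R : realType) (X : tvsType R) (V : set X) : Prop :=
  V 0 /\ (forall x y, V x -> V y -> V (x + y)) /\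
  (forall (a : R) x, V x -> V (a *: x)).

Definition closed_affine_subspace (R : realType) (X : tvsType R) (L : set X) : Prop :=
  closed L /\ exists (x0 : X) (V : set X), lin_subspace V /\ L = [set x0 + v | v in V].

Definition gen_polyhedral_convex (R : realType) (X : tvsType R) (D : set X) : Prop :=
  exists (p : nat) (xs : 'I_p -> X -> R) (alpha : 'I_p -> R) (L : set X),
    closed_affine_subspace L /\ (forall i, cont_lin_functional (xs i)) /\
    D = [set x | L x /\ forall i, xs i x <= alpha i].

Definition is_cone (R : realType) (Y : tvsType R) (K : set Y) : Prop :=
  forall (t : R) (y : Y), 0 < t -> K y -> K (t *: y).

Definition polyhedral_convex_cone (R : realType) (Y : tvsType R) (K : set Y) : Prop :=
  is_cone K /\
  exists (q : nat) (ys : 'I_q -> Y -> R) (beta : 'I_q -> R),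
    (forall i, cont_lin_functional (ys i)) /\
    K = [set y | forall i, ys i y <= beta i].

Definition weakly_efficient_set (R : realType) (X Y : tvsType R)
    (M : X -> Y) (D : set X) (K : set Y) : set X :=
  [set u | D u /\ ~ (exists x, D x /\ interior K (M u - M x))].

From mathcomp Require Import all_boot all_order all_algebra.
From mathcomp Require Import all_classical all_reals all_analysis.
From mathcomp Require Import lra.
Set Implicit Arguments. Unset Strict Implicit. Unset Printing Implicit Defensive.
Import Order.TTheory GRing.Theory Num.Theory.
Import numFieldTopology.Exports.
Local Open Scope classical_set_scope.
Local Open Scope ring_scope.

(** If u is weakly efficient, then so is every point v of the face of D on
    which the constraints active at u are active: were x in D with
    M v - M x in int K, then for small t > 0 the point u + t (x - v) would
    still lie in D (the inactive constraints have slack at u, the active ones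
    do not increase along x - v), and M u - M (u + t (x - v)) = t (M v - M x)
    lies in int K because K is a cone.  Hence E^w is the union of those faces
    of D (finitely many, one per set of constraints) that it contains. *)

Lemma linear_shift (R : pzRingType) (U V : lmodType R) (f : U -> V) :
  linear f -> forall (t : R) (x v u : U),
  f (t *: (x - v) + u) = t *: (f x - f v) + f u.
Proof.
move=> f_lin t x v u; rewrite f_lin; congr (t *: _ + _).
by rewrite addrC -scaleN1r f_lin scaleN1r addrC.
Qed.

Lemma small_step_exists (R : realFieldType) (I : finType) (d s : I -> R) :
  (forall i, 0 <= s i) -> (forall i, s i = 0 -> d i <= 0) ->
  exists2 t : R, 0 < t & forall i, t * d i <= s i.
Proof.
move=> s_ge0 s0_d.
pose e i := if s i == 0 then 1 else s i / (1 + `|d i|).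
have norm1_gt0 i : 0 < 1 + `|d i| by rewrite ltr_pwDl ?normr_ge0.
have e_gt0 i : 0 < e i.
  rewrite /e; case: eqP => // /eqP s_neq0.
  by rewrite divr_gt0 // lt_def s_neq0 s_ge0.
exists (\big[Order.min/1]_i e i); first exact: lt_bigmin.
move=> i; have := bigmin_le 1 i e; set t := \big[_/_]_i _.
have t_gt0 : 0 < t by exact: lt_bigmin.
rewrite /e; case: eqP => [s0 _ | /eqP s_neq0 t_le].
  by rewrite s0 pmulr_rle0 // s0_d.
have d_le := ler_norm (d i); have d_ge0 := normr_ge0 (d i).
have s_gt0 : 0 < s i by rewrite lt_def s_neq0 s_ge0.
rewrite ler_pdivlMr // in t_le; nra.
Qed.

Lemma closed_affine_subspace_shift (R : realType) (X : tvsType R)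
    (L : set X) (t : R) (x v u : X) :
  closed_affine_subspace L -> L x -> L v -> L u -> L (t *: (x - v) + u).
Proof.
move=> [_ [x0 [V [[_ [VD VZ]] ->]]]] [a Va <-] [b Vb <-] [c Vc <-].
exists (t *: (a - b) + c); last by rewrite opprD addrACA subrr add0r addrCA.
by apply: (VD) => //; apply: (VZ); apply: (VD) => //; rewrite -scaleN1r; exact: VZ.
Qed.

Definition active_ineqs (R : numDomainType) (X : Type) (p : nat)
  (xs : 'I_p -> X -> R) (alpha : 'I_p -> R) (u : X) : {set 'I_p} :=
  [set j | xs j u == alpha j].

Definition ineq_face (R : numDomainType) (X : Type) (D : set X) (p : nat)
  (xs : 'I_p -> X -> R) (alpha : 'I_p -> R) (J : {set 'I_p}) : set X :=
  [set x | D x /\ forall j, j \in J -> alpha j <= xs j x].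

Lemma mem_ineq_face_active (R : numDomainType) (X : Type) (D : set X)
    (p : nat) (xs : 'I_p -> X -> R) (alpha : 'I_p -> R) (u : X) :
  D u -> ineq_face D xs alpha (active_ineqs xs alpha u) u.
Proof. by move=> Du; split=> // j; rewrite inE => /eqP ->. Qed.

Section GenPolyhedral.
Variables (R : realType) (X : tvsType R).

Lemma cont_lin_functional0 : cont_lin_functional (fun _ : X => 0 : R).
Proof. by split=> [a x y|]; [rewrite mulr0 addr0 | exact: cst_continuous]. Qed.

Lemma cont_lin_functionalN (g : X -> R) :
  cont_lin_functional g -> cont_lin_functional (fun x => - g x).
Proof.
move=> [g_lin g_cont]; split=> [a x y|x]; first by rewrite g_lin opprD mulrN.
exact: (continuousN (g_cont x)).
Qed.

Lemma gen_polyhedral_convex_ineqs (D : set X) (q : nat)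
    (g : 'I_q -> X -> R) (b : 'I_q -> R) :
  gen_polyhedral_convex D -> (forall j, cont_lin_functional (g j)) ->
  gen_polyhedral_convex [set x | D x /\ forall j, g j x <= b j].
Proof.
move=> [p [xs [alpha [L [hL [hxs ->]]]]]] hg.
pose glue T (f : 'I_p -> T) (f' : 'I_q -> T) (k : 'I_(p + q)) :=
  match fintype.split k with inl i => f i | inr j => f' j end.
exists (p + q)%N, (glue _ xs g), (glue _ alpha b), L; split=> //; split.
  by move=> k; rewrite /glue; case: fintype.split.
apply/seteqP; split=> x /=.
  by move=> [[Lx hi] hj]; split=> // k; rewrite /glue; case: fintype.split.
move=> [Lx hk]; split; first split=> //.
  by move=> i; have := hk (lshift q i); rewrite /glue (unsplitK (inl i)).
by move=> j; have := hk (rshift p j); rewrite /glue (unsplitK (inr j)).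
Qed.

Lemma gen_polyhedral_convex_ineqs_on (D : set X) (q : nat)
    (g : 'I_q -> X -> R) (b : 'I_q -> R) (J : {pred 'I_q}) :
  gen_polyhedral_convex D -> (forall j, cont_lin_functional (g j)) ->
  gen_polyhedral_convex [set x | D x /\ forall j, j \in J -> g j x <= b j].
Proof.
move=> hD hg.
have -> : [set x | D x /\ forall j, j \in J -> g j x <= b j] =
    [set x | D x /\ forall j,
      (if j \in J then g j else fun=> 0) x <= (if j \in J then b j else 0)].
  by apply/seteqP; split=> x [Dx hx]; split=> // j;
    case: (j \in J) (hx j) => // h *; apply: h.
apply: gen_polyhedral_convex_ineqs => // j; case: (j \in J) => //.
exact: cont_lin_functional0.
Qed.

Lemma ineq_face_gen_polyhedral (D : set X) (p : nat)
    (xs : 'I_p -> X -> R) (alpha : 'I_p -> R) (J : {set 'I_p}) :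
  gen_polyhedral_convex D -> (forall j, cont_lin_functional (xs j)) ->
  gen_polyhedral_convex (ineq_face D xs alpha J).
Proof.
move=> hD hxs.
have -> : ineq_face D xs alpha J =
    [set x | D x /\ forall j, j \in J -> - xs j x <= - alpha j].
  by apply/seteqP; split=> x [Dx hx]; split=> // j /hx; rewrite lerN2.
apply: gen_polyhedral_convex_ineqs_on => // j; exact: cont_lin_functionalN.
Qed.

End GenPolyhedral.

Section WeaklyEfficientFaces.
Variables (R : realType) (X Y : tvsType R).
Variables (M : X -> Y) (K : set Y) (L : set X) (D : set X).
Variables (p : nat) (xs : 'I_p -> X -> R) (alpha : 'I_p -> R).
Hypothesis M_lin : linear M.
Hypothesis K_cone : is_cone K.
Hypothesis L_aff : closed_affine_subspace L.
Hypothesis xs_lin : forall j, linear (xs j : X -> R^o).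
Hypothesis D_def : D = [set x | L x /\ forall j, xs j x <= alpha j].

Lemma interior_cone_scale (t : R) (y : Y) :
  0 < t -> interior K y -> interior K (t *: y).
Proof.
move=> t_gt0 Ky; apply: filterS (nbhsZ (lt0r_neq0 t_gt0) Ky).
by move=> _ [z Kz <-]; exact: K_cone.
Qed.

Lemma weakly_efficient_face (u : X) : weakly_efficient_set M D K u ->
  ineq_face D xs alpha (active_ineqs xs alpha u) `<=` weakly_efficient_set M D K.
Proof.
move=> [Du u_eff] v [Dv v_act]; split=> // -[x [Dx int_vx]]; apply: u_eff.
rewrite D_def in Du Dv Dx; move: Du Dv Dx => [Lu u_le] [Lv v_le] [Lx x_le].
have slack_ge0 j : 0 <= alpha j - xs j u by rewrite subr_ge0.
have tight_descent j : alpha j - xs j u = 0 -> xs j x - xs j v <= 0.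
  move=> /eqP; rewrite subr_eq0 eq_sym => act.
  by have := v_act j; rewrite inE act => /(_ isT); have := x_le j; lra.
have [t t_gt0 t_step] := small_step_exists slack_ge0 tight_descent.
exists (t *: (x - v) + u); split.
  rewrite D_def; split; first exact: closed_affine_subspace_shift.
  move=> j; rewrite (linear_shift (xs_lin j)) -[_ *: _]/(t * _).
  by have := t_step j; lra.
have -> : M u - M (t *: (x - v) + u) = t *: (M v - M x).
  by rewrite (linear_shift M_lin) opprD addrCA subrr addr0 -scalerN opprB.
exact: interior_cone_scale.
Qed.

End WeaklyEfficientFaces.

Theorem theorem4p5 (R : realType) (X Y : tvsType R)
    (hX : hausdorff_space X) (hY : hausdorff_space Y)
    (M : X -> Y) (hM : cont_lin_map M)
    (D : set X) (hD : gen_polyhedral_convex D)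
    (K : set Y) (hK : polyhedral_convex_cone K) :
  exists (k : nat) (P : 'I_k -> set X),
    (forall i, gen_polyhedral_convex (P i)) /\
    weakly_efficient_set M D K = [set x | exists i, P i x].
Proof.
have [p [xs [alpha [L [hL [hxs D_def]]]]]] := hD.
pose E := weakly_efficient_set M D K.
pose faces_in_E := [set J : {set 'I_p} | `[< ineq_face D xs alpha J `<=` E >]]%SET.
exists #|faces_in_E|, (fun i => ineq_face D xs alpha (enum_val i)); split.
  by move=> i; exact: ineq_face_gen_polyhedral.
apply/seteqP; split=> [u Eu | x [i Fx]].
  have u_face : active_ineqs xs alpha u \in faces_in_E.
    rewrite inE; apply/asboolP.
    exact: (weakly_efficient_face hM.1 hK.1 hL (fun j => (hxs j).1) D_def Eu).
  exists (enum_rank_in u_face (active_ineqs xs alpha u)).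
  rewrite (enum_rankK_in u_face u_face).
  exact: (mem_ineq_face_active xs alpha Eu.1).
by have := enum_valP i; rewrite inE => /asboolP; exact.
Qed.
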